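(* Let $1\le m<n$ and let $v_1\ge v_2\ge\cdots\ge v_n$ be reals with $v_m>0$. Let $k=\max\{i:v_i>v_m/2\}$ (so $k\ge m$). For $i\in[n]$ define $B_i=\sum_{j=1}^k\frac{m}{j(j+1)}\log_2^\dagger(v_i/v_j)$. Then $\sum_{i=m}^kB_i\le m$.
   Context: $\log_2^\dagger(\alpha)=\max(0,\min(1,\log_2\alpha))$ for $\alpha\ge 0$. *)

From mathcomp Require Import all_boot all_order all_algebra.
From mathcomp Require Import all_classical all_reals all_analysis.
Set Implicit Arguments. Unset Strict Implicit. Unset Printing Implicit Defensive.
Import Order.TTheory GRing.Theory Num.Theory.
Local Open Scope ring_scope.

(* log_2^dagger(a) = max(0, min(1, log_2 a)) for a >= 0;
   for a = 0, log_2 a = -oo so the value is 0.  We also return 0 for a < 0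
   (never used in the theorem). *)
Definition log2dag {R : realType} (a : R) : R :=
  if a <= 0 then 0 else Num.max 0 (Num.min 1 (ln a / ln 2)).

Definition kidx {R : realType} (n m : nat) (v : nat -> R) : nat :=
  (\max_(1 <= i < n.+1 | (v m / 2 < v i)%R) i)%N.

Definition Bval {R : realType} (n m : nat) (v : nat -> R) (i : nat) : R :=
  \sum_(1 <= j < (kidx n m v).+1)
     (m%:R / (j * j.+1)%:R) * log2dag (v i / v j).

From mathcomp Require Import all_boot all_order all_algebra.
From mathcomp Require Import all_classical all_reals all_analysis.
From mathcomp Require Import ring lra.
Set Implicit Arguments.
Unset Strict Implicit.
Unset Printing Implicit Defensive.
Import Order.TTheory GRing.Theory Num.Theory.

(* With b_j := -log_2 v_j, which is nondecreasing and satisfies b_k - b_m <= 1 by the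
   choice of k, every ratio v_i/v_j (m <= i <= k, j <= k) lies in (0, 2], so
   log_2^dagger(v_i/v_j) = max(0, b_j - b_i) and B_i = m * sum_j max(0, b_j - b_i)/(j(j+1)).
   Induction on k shows that sum_{i=m}^k of these normalized sums is at most b_k - b_m,
   the induction being carried by the correction term (k+1)^-1 sum_{i=m}^k (b_k - b_i):
   passing from k to k+1 adds the column j = k+1, and 1/((k+1)(k+2)) + 1/(k+2) = 1/(k+1). *)

Lemma bigmax_cond_id (r : seq nat) (P : pred nat) i0 :
  i0 \in r -> P i0 -> P (\max_(i <- r | P i) i).
Proof.
move=> r_i0 P_i0.
have : (\max_(i <- r | P i) i == 0) || P (\max_(i <- r | P i) i).
  apply: (big_ind (fun y => (y == 0) || P y)) => // [x y | i ->]; last by rewrite orbT.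
  by rewrite /maxn; case: ifP.
case/orP => [/eqP max0 | //].
have : (i0 <= \max_(i <- r | P i) i)%N := leq_bigmax_seq i0 r_i0 P_i0.
by rewrite max0 leqn0 => /eqP i00; rewrite -i00.
Qed.

Local Open Scope ring_scope.

Lemma kidx_le (R : realType) n m (v : nat -> R) : (kidx n m v <= n)%N.
Proof.
by apply/bigmax_leqP_seq => i; rewrite mem_index_iota ltnS => /andP[].
Qed.

Section Log2.
Variable R : realType.

Definition log2 (x : R) : R := ln x / ln 2.

Lemma ln2_gt0 : 0 < ln (2 : R).
Proof. by apply: ln_gt0; lra. Qed.

Lemma ler_log2 (x y : R) : 0 < x -> 0 < y -> (log2 x <= log2 y) = (x <= y).
Proof. by move=> x_gt0 y_gt0; rewrite ler_pM2r ?invr_gt0 ?ln2_gt0 // ler_ln. Qed.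

Lemma log2_div (x y : R) : 0 < x -> 0 < y -> log2 (x / y) = log2 x - log2 y.
Proof. by move=> x_gt0 y_gt0; rewrite /log2 ln_div ?posrE // mulrBl. Qed.

Lemma log2_le1 (a : R) : 0 < a <= 2 -> log2 a <= 1.
Proof.
case/andP=> a_gt0 a_le2.
by rewrite /log2 ler_pdivrMr ?ln2_gt0 // mul1r ler_ln ?posrE.
Qed.

Lemma log2dag_le2 (a : R) : 0 < a <= 2 -> log2dag a = Num.max 0 (log2 a).
Proof.
move=> a_range; have /andP[a_gt0 _] := a_range.
by rewrite /log2dag leNgt a_gt0 /= (min_idPr (log2_le1 a_range)).
Qed.

End Log2.

Section WeightedGaps.
Variables (R : realFieldType) (b : nat -> R) (N : nat).
Hypothesis b_mono : forall i j, (1 <= i)%N -> (i <= j)%N -> (j <= N)%N -> b i <= b j.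

Definition Brow (K i : nat) : R :=
  \sum_(1 <= j < K.+1) ((j * j.+1)%:R)^-1 * Num.max 0 (b j - b i).

Lemma Brow_diag K : (1 <= K <= N)%N -> Brow K K = 0.
Proof.
case/andP=> K_ge1 K_leN; rewrite /Brow big_nat big1 // => j /andP[j_ge1 j_ltK].
by rewrite (max_idPl _) ?mulr0 // subr_le0 b_mono.
Qed.

Lemma Brow_succ K i : (1 <= i <= K)%N -> (K < N)%N ->
  Brow K.+1 i = Brow K i + ((K.+1 * K.+2)%:R)^-1 * (b K.+1 - b i).
Proof.
case/andP=> i_ge1 i_leK K_ltN.
rewrite /Brow big_nat_recr //= (max_idPr _) // subr_ge0 b_mono //.
exact: leqW.
Qed.

Lemma sum_Brow_le m K : (1 <= m <= K)%N -> (K <= N)%N ->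
  \sum_(m <= i < K.+1) Brow K i + (K.+1%:R)^-1 * \sum_(m <= i < K.+1) (b K - b i)
    <= b K - b m.
Proof.
case/andP=> m_ge1; elim: K => [|K IH]; first by rewrite leqn0 => /eqP m0; rewrite m0 in m_ge1.
rewrite leq_eqVlt => /orP[/eqP <- m_leN | m_leK K_ltN].
  by rewrite !big_nat1 Brow_diag ?m_ge1 // subrr mulr0 addr0.
have m_ltK1 : (m <= K.+1)%N by exact: leqW.
rewrite !(big_nat_recr K.+1) //= Brow_diag ?K_ltN ?(leq_trans m_ge1) // subrr !addr0.
have Brow_step i : (m <= i < K.+1)%N ->
    Brow K.+1 i = Brow K i + ((K.+1 * K.+2)%:R)^-1 * (b K.+1 - b i).
  by case/andP=> m_le_i i_ltK1; rewrite Brow_succ // (leq_trans m_ge1 m_le_i).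
rewrite (eq_big_nat _ _ Brow_step) big_split -mulr_sumr /=.
set S := \sum_(m <= i < K.+1) Brow K i.
set X := \sum_(m <= i < K.+1) (b K - b i).
set delta := b K.+1 - b K.
have shift : \sum_(m <= i < K.+1) (b K.+1 - b i) = (K.+1 - m)%:R * delta + X.
  rewrite mulr_natl -sumr_const_nat -big_split /=.
  by apply: eq_bigr => i _; rewrite addrA subrK.
have telescope : ((K.+1 * K.+2)%:R)^-1 + (K.+2%:R)^-1 = (K.+1%:R)^-1 :> R.
  by rewrite natrM; field; rewrite -[1]/(1%:R) -[2]/(2%:R) -!natrD !pnatr_eq0.
have delta_ge0 : 0 <= delta by rewrite subr_ge0 b_mono // (leq_trans m_ge1).
have delta_part : (K.+1%:R)^-1 * ((K.+1 - m)%:R * delta) <= delta.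
  rewrite mulrA ler_piMl // ler_pdivrMl // mulr1 ler_nat.
  exact: leq_subr.
have IHK := IH m_leK (ltnW K_ltN).
rewrite -addrA -mulrDl telescope shift mulrDr [leLHS]addrCA [leLHS]addrC.
apply: le_trans (lerD IHK delta_part) _.
by rewrite /delta addrC addrA subrK.
Qed.

Lemma sum_Brow_le_gap m K : (1 <= m <= K)%N -> (K <= N)%N ->
  \sum_(m <= i < K.+1) Brow K i <= b K - b m.
Proof.
move=> m_range K_leN; apply: le_trans (sum_Brow_le m_range K_leN).
rewrite lerDl mulr_ge0 // big_nat sumr_ge0 // => i /andP[m_le_i i_leK].
case/andP: m_range => m_ge1 _.
by rewrite subr_ge0 b_mono // (leq_trans m_ge1).
Qed.

End WeightedGaps.

Section Kidx.
Variables (R : realType) (n m : nat) (v : nat -> R).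
Hypotheses (m_range : (1 <= m <= n)%N) (vm_gt0 : 0 < v m).
Hypothesis v_noninc : forall i j, (1 <= i)%N -> (i <= j)%N -> (j <= n)%N -> v j <= v i.
Local Notation k := (kidx n m v).

Let m_index : m \in index_iota 1 n.+1.
Proof. by rewrite mem_index_iota ltnS. Qed.

Let vm_cond : v m / 2 < v m.
Proof. by rewrite ltr_pdivrMr // ltr_pMr // ltr1n. Qed.

Lemma kidx_ge : (m <= k)%N.
Proof. exact: (leq_bigmax_seq m m_index vm_cond). Qed.

Lemma kidx_spec : v m / 2 < v k.
Proof. exact: (bigmax_cond_id (P := fun i => v m / 2 < v i) m_index vm_cond). Qed.

Let m_ge1 : (1 <= m)%N.
Proof. by case/andP: m_range. Qed.

Lemma kidx_v_gt0 j : (1 <= j <= k)%N -> 0 < v j.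
Proof.
case/andP=> j_ge1 j_le_k; apply: lt_le_trans (v_noninc j_ge1 j_le_k (kidx_le n m v)).
by apply: lt_trans kidx_spec; rewrite divr_gt0.
Qed.

Lemma kidx_ratio_le2 i j : (m <= i <= k)%N -> (1 <= j <= k)%N -> 0 < v i / v j <= 2.
Proof.
case/andP=> m_le_i i_le_k j_range; have /andP[j_ge1 j_le_k] := j_range.
have vj_gt0 := kidx_v_gt0 j_range.
have vi_gt0 : 0 < v i by rewrite kidx_v_gt0 // i_le_k (leq_trans m_ge1).
rewrite divr_gt0 //= ler_pdivrMr //.
have vi_le_vm : v i <= v m by rewrite v_noninc // (leq_trans i_le_k) ?kidx_le.
have vm_lt : v m < 2 * v k by rewrite mulrC -ltr_pdivrMr ?kidx_spec.
apply: le_trans vi_le_vm (ltW (lt_le_trans vm_lt _)).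
by rewrite ler_pM2l // v_noninc // kidx_le.
Qed.

Lemma neglog2_kidx_mono i j : (1 <= i)%N -> (i <= j)%N -> (j <= k)%N ->
  - log2 (v i) <= - log2 (v j).
Proof.
move=> i_ge1 i_le_j j_le_k.
rewrite lerN2 ler_log2 ?kidx_v_gt0 ?i_ge1 ?(leq_trans i_ge1 i_le_j) ?(leq_trans i_le_j) //.
by rewrite v_noninc // (leq_trans j_le_k) ?kidx_le.
Qed.

Lemma Bval_Brow i : (m <= i < k.+1)%N ->
  Bval n m v i = m%:R * Brow (fun j => - log2 (v j)) k i.
Proof.
rewrite ltnS => i_range; have /andP[m_le_i i_le_k] := i_range.
have i_range1 : (1 <= i <= k)%N by rewrite i_le_k (leq_trans m_ge1).
rewrite /Bval /Brow mulr_sumr; apply: eq_big_nat => j; rewrite ltnS => j_range.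
by rewrite mulrA log2dag_le2 ?kidx_ratio_le2 // log2_div ?kidx_v_gt0 // opprK addrC.
Qed.

Lemma neglog2_kidx_gap : - log2 (v k) - - log2 (v m) <= 1.
Proof.
have m_le_k := kidx_ge.
rewrite opprK addrC -log2_div ?kidx_v_gt0 ?m_ge1 ?m_le_k ?leqnn ?(leq_trans m_ge1) //.
by rewrite log2_le1 // kidx_ratio_le2 ?leqnn ?m_le_k ?(leq_trans m_ge1).
Qed.

End Kidx.

Theorem mainTheorem19 (R : realType) (n m : nat) (v : nat -> R)
  (hm1 : (1 <= m)%N) (hmn : (m < n)%N)
  (hv : forall i j : nat, (1 <= i)%N -> (i <= j)%N -> (j <= n)%N -> v j <= v i)
  (hvm : 0 < v m) :
  \sum_(m <= i < (kidx n m v).+1) Bval n m v i <= m%:R.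
Proof.
have m_range : (1 <= m <= n)%N by rewrite hm1 ltnW.
rewrite (eq_big_nat _ _ (Bval_Brow m_range hvm hv)) -mulr_sumr.
rewrite -[leRHS]mulr1 ler_wpM2l //.
apply: le_trans (neglog2_kidx_gap m_range hvm hv).
apply: sum_Brow_le_gap (leqnn _); first exact: neglog2_kidx_mono m_range hvm hv.
by rewrite hm1 (kidx_ge m_range hvm).
Qed.
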